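(* $\mathrm{Sort}(\mathrm{SC}_{\underline{12}3})$ is not a permutation class.
   Context: $\mathfrak S_n$ is the set of permutations of $\{1,\dots,n\}$. A permutation $\pi$ contains a (classical) permutation $\tau$ if some subsequence of $\pi$ has the same relative order as $\tau$. A permutation class is a set $\Pi$ of permutations such that every permutation contained in some $\pi\in\Pi$ is also in $\Pi$. A vincular pattern is a permutation with some entries underlined; a sequence contains it if it has a subsequence with the same relative order in which entries corresponding to adjacent underlined entries occupy consecutive positions. An occurrence of $\underline{12}3$ is $a_j a_{j+1} a_l$ with $l>j+1$ and $a_j<a_{j+1}<a_l$. For a pattern $\sigma$, the map $\mathrm{SC}_\sigma$ acts on $\tau$: read entries left to right; when the next entry $x$ is read, if pushing $x$ yields a stack whose entries read top to bottom (stack adjacency = consecutive positions) avoid $\sigma$, push $x$; otherwise pop the top stack entry to the output and repeat. At the end pop all remaining entries; the output is $\mathrm{SC}_\sigma(\tau)$. West's stack-sorting map is $s=\mathrm{SC}_{21}$. $\mathrm{Sort}_n(\mathrm{SC}_\sigma)=\{\tau\in\mathfrak S_n : s(\mathrm{SC}_\sigma(\tau))=12\cdots n\}$ and $\mathrm{Sort}(\mathrm{SC}_\sigma)=\bigcup_{n\ge1}\mathrm{Sort}_n(\mathrm{SC}_\sigma)$. *)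

From mathcomp Require Import all_boot.
Set Implicit Arguments. Unset Strict Implicit. Unset Printing Implicit Defensive.

Definition is_perm (p : seq nat) : bool := perm_eq p (iota 1 (size p)).

Definition order_iso (s t : seq nat) : bool :=
  (size s == size t) &&
  all (fun i => all (fun j => (nth 0 s i < nth 0 s j) == (nth 0 t i < nth 0 t j))
                    (iota 0 (size s))) (iota 0 (size s)).

Fixpoint masks (n : nat) : seq bitseq :=
  if n is n'.+1 then [seq false :: m | m <- masks n'] ++ [seq true :: m | m <- masks n']
  else [:: [::]].

(* A vincular pattern: a permutation tau together with the list u of
   underline flags (u`_i = true iff the i-th entry of tau is underlined). *)
Record vpattern := VPat { vpat : seq nat; vunder : bitseq }.

Definition adj_ok (u : bitseq) (idx : seq nat) : bool :=
  all (fun i => (nth false u i && nth false u i.+1) ==> (nth 0 idx i.+1 == (nth 0 idx i).+1))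
      (iota 0 (size idx).-1).

Definition vcontains (a : seq nat) (sg : vpattern) : bool :=
  has (fun m => let idx := mask m (iota 0 (size a)) in
                [&& size idx == size (vpat sg),
                    order_iso (map (fun k => nth 0 a k) idx) (vpat sg)
                  & adj_ok (vunder sg) idx])
      (masks (size a)).

Definition vavoids (a : seq nat) (sg : vpattern) : bool := ~~ vcontains a sg.

Definition classical (tau : seq nat) : vpattern := VPat tau (nseq (size tau) false).
Definition contains (pi tau : seq nat) : bool := vcontains pi (classical tau).

(* The stack is a sequence read from top (head) to bottom. *)
Fixpoint sc_insert (sg : vpattern) (x : nat) (stk out : seq nat) : seq nat * seq nat :=
  if vavoids (x :: stk) sg then (x :: stk, out)
  else match stk with
       | [::] => ([:: x], out)   (* never reached for patterns of length >= 2 *)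
       | y :: stk' => sc_insert sg x stk' (rcons out y)
       end.

Fixpoint sc_run (sg : vpattern) (inp stk out : seq nat) : seq nat :=
  match inp with
  | [::] => out ++ stk
  | x :: inp' => let: (stk', out') := sc_insert sg x stk out in sc_run sg inp' stk' out'
  end.

Definition SC (sg : vpattern) (tau : seq nat) : seq nat := sc_run sg tau [::] [::].

Definition west_s (tau : seq nat) : seq nat := SC (classical [:: 2; 1]) tau.

Definition pat_12_3 : vpattern := VPat [:: 1; 2; 3] [:: true; true; false].

Definition Sort (sg : vpattern) (tau : seq nat) : bool :=
  [&& is_perm tau, 0 < size tau & west_s (SC sg tau) == iota 1 (size tau)].

Definition perm_class (P : seq nat -> bool) : Prop :=
  (forall pi, P pi -> is_perm pi && (0 < size pi)) /\
  (forall pi tau, P pi -> is_perm tau -> 0 < size tau -> contains pi tau -> P tau).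

Example west_ex : west_s [:: 2; 3; 1] = [:: 2; 1; 3]. Proof. by []. Qed.
Example vc_ex : vcontains [:: 1; 2; 5; 3] pat_12_3 && ~~ vcontains [:: 2; 1; 4; 3] pat_12_3.
Proof. by []. Qed.

From mathcomp Require Import all_boot.

(* The permutation 4132 lies in Sort(SC_{12_3}) but its pattern 132 does not:
   SC_{12_3}(4132) = 3214 and s(3214) = 1234, whereas SC_{12_3}(132) = 231
   and s(231) = 213. *)

Lemma not_perm_class_witness (P : seq nat -> bool) (pi tau : seq nat) :
  P pi -> is_perm tau -> 0 < size tau -> contains pi tau -> ~~ P tau ->
  ~ perm_class P.
Proof.
by move=> Ppi perm_tau tau_gt0 pi_tau /negP notPtau [_ /(_ pi tau)]; auto.
Qed.

Lemma Sort_12_3_4132 : Sort pat_12_3 [:: 4; 1; 3; 2].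
Proof. by []. Qed.

Lemma Sort_12_3_132N : ~~ Sort pat_12_3 [:: 1; 3; 2].
Proof. by []. Qed.

Lemma contains_4132_132 : contains [:: 4; 1; 3; 2] [:: 1; 3; 2].
Proof. by []. Qed.

Theorem mainTheorem19 : ~ perm_class (Sort pat_12_3).
Proof.
have perm_132 : is_perm [:: 1; 3; 2] by [].
exact: not_perm_class_witness Sort_12_3_4132 perm_132 isT
  contains_4132_132 Sort_12_3_132N.
Qed.
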